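(* Let $k\ge1$, $\lambda>0$ and $\theta>1$. Then every solution $(x,y)$ with $x,y>0$ of $$x=\lambda\Bigl(\frac{1+x+\theta y}{1+x+y}\Bigr)^k,\qquad y=\lambda\Bigl(\frac{1+\theta x+y}{1+x+y}\Bigr)^k$$ satisfies $x=y$. *)

From Stdlib Require Import Reals.

(* Both right-hand sides share the denominator 1 + x + y, and the two
   numerators differ by (theta - 1)(y - x).  Hence, if x < y, the base of the
   power in the equation for x is strictly larger than the one in the equation
   for y; since t |-> t^k is strictly increasing on [0, oo) for k >= 1, this
   forces x > y, a contradiction.  The system is invariant under swapping x
   and y, so y < x is excluded in the same way, and x = y follows. *)

From Stdlib Require Import Reals Lra Lia Psatz.
Open Scope R_scope.

Lemma pow_lt_compat (a b : R) (n : nat) :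
  (1 <= n)%nat -> 0 <= b -> b < a -> b ^ n < a ^ n.
Proof.
  intros Hn Hb Hba.
  induction n as [|n IH]; [lia|].
  destruct n as [|n]; [simpl; lra|].
  assert (Hpow : b ^ S n < a ^ S n) by (apply IH; lia).
  assert (0 <= b ^ S n) by (apply pow_le; lra).
  change (b * b ^ S n < a * a ^ S n).
  nra.
Qed.

Lemma bases_compare (theta x y : R) :
  1 < theta -> 0 < x -> x < y ->
  0 <= (1 + theta * x + y) / (1 + x + y) /\
  (1 + theta * x + y) / (1 + x + y) < (1 + x + theta * y) / (1 + x + y).
Proof.
  intros Htheta Hx Hxy.
  assert (Hinv : 0 < / (1 + x + y)) by (apply Rinv_0_lt_compat; lra).
  unfold Rdiv; split.
  - apply Rmult_le_pos; nra.
  - apply Rmult_lt_compat_r; nra.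
Qed.

Lemma solution_not_lt (k : nat) (lambda theta x y : R) :
  (1 <= k)%nat -> 0 < lambda -> 1 < theta -> 0 < x ->
  x = lambda * ((1 + x + theta * y) / (1 + x + y)) ^ k ->
  y = lambda * ((1 + theta * x + y) / (1 + x + y)) ^ k ->
  ~ x < y.
Proof.
  intros Hk Hlambda Htheta Hx Hxeq Hyeq Hxy.
  destruct (bases_compare theta x y Htheta Hx Hxy) as [Hnonneg Hlt].
  pose proof (pow_lt_compat _ _ k Hk Hnonneg Hlt) as Hpow.
  apply (Rmult_lt_compat_l lambda) in Hpow; [|exact Hlambda].
  rewrite <- Hxeq, <- Hyeq in Hpow.
  lra.
Qed.

Theorem mainTheorem3 (k : nat) (lambda theta x y : R)
  (hk : (1 <= k)%nat) (hlambda : 0 < lambda) (htheta : 1 < theta)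
  (hx : 0 < x) (hy : 0 < y)
  (hxeq : x = lambda * ((1 + x + theta * y) / (1 + x + y)) ^ k)
  (hyeq : y = lambda * ((1 + theta * x + y) / (1 + x + y)) ^ k) :
  x = y.
Proof.
  assert (Hyeq' : y = lambda * ((1 + y + theta * x) / (1 + y + x)) ^ k).
  { rewrite hyeq at 1; f_equal; f_equal; f_equal; ring. }
  assert (Hxeq' : x = lambda * ((1 + theta * y + x) / (1 + y + x)) ^ k).
  { rewrite hxeq at 1; f_equal; f_equal; f_equal; ring. }
  pose proof (solution_not_lt k lambda theta x y hk hlambda htheta hx hxeq hyeq).
  pose proof (solution_not_lt k lambda theta y x hk hlambda htheta hy Hyeq' Hxeq').
  lra.
Qed.
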